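(* Let $M$ be a finite set of item types and let $\mathcal{D}=(p_j)_{j\in M}$ be a probability distribution on $M$. There are $n$ agents with valuations $w_i:\mathbb{Z}_+^{M}\to\mathbb{R}_+$ (functions of multisets of items) that are monotone and have the property of diminishing returns. Suppose $m$ items arrive, each drawn independently from $\mathcal{D}$, and let $OPT=\mathbb{E}[OPT(\mathcal{M})]$, where $OPT(\mathcal{M})$ is the maximum of $\sum_i w_i(S_i)$ over partitions of the realized arrival multiset $\mathcal{M}$ into multisets $S_1,\dots,S_n$. Consider the greedy algorithm: if the multisets assigned so far are $(T_1,\dots,T_n)$ when item $j$ arrives, it assigns $j$ to an agent $i$ maximizing $w_i(T_i+j)-w_i(T_i)$. Then the expected welfare of the greedy algorithm is at least $(1-1/e)\,OPT$.
   Context: Multisets over $M$ are identified with vectors in $\mathbb{Z}_+^M$. $T+j$ denotes the multiset $T$ with one extra copy of $j$, and $T+S$ denotes the sum of multiplicities. A function $f:\mathbb{Z}_+^M\to\mathbb{R}$ has the property of diminishing returns if for all $x\le y$ (coordinatewise) and every unit vector $e_j$ one has $f(x+e_j)-f(x)\ge f(y+e_j)-f(y)$. It is monotone if $f(x)\le f(y)$ whenever $x\le y$. *)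

From Stdlib Require Import Reals List.
Import ListNotations.
Open Scope R_scope.

(* Multisets over M are functions M -> nat (vectors in Z_+^M).
   Agents are indexed by 0..n-1; a profile of bundles is nat -> (M -> nat). *)

Section Defs.
Context {M : Type} (eqd : forall x y : M, {x = y} + {x <> y}).

Fixpoint rsum (n : nat) (f : nat -> R) : R :=
  match n with O => 0 | S k => rsum k f + f k end.

Definition madd (x : M -> nat) (j : M) : M -> nat :=
  fun j' => if eqd j' j then S (x j') else x j'.

Definition mle (x y : M -> nat) : Prop := forall j, (x j <= y j)%nat.

Definition monotone (f : (M -> nat) -> R) : Prop :=
  forall x y, mle x y -> f x <= f y.

Definition diminishing_returns (f : (M -> nat) -> R) : Prop :=
  forall x y j, mle x y -> f (madd x j) - f x >= f (madd y j) - f y.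

Fixpoint seqs {A : Type} (l : list A) (m : nat) : list (list A) :=
  match m with
  | O => [[]]
  | S k => flat_map (fun a => map (cons a) (seqs l k)) l
  end.

Definition seq_prob (p : M -> R) (s : list M) : R :=
  fold_right (fun j acc => p j * acc) 1 s.

(** expectation over m i.i.d. draws from p (support enumerated by enum) *)
Definition expect (enum : list M) (p : M -> R) (m : nat) (f : list M -> R) : R :=
  fold_right (fun s acc => seq_prob p s * f s + acc) 0 (seqs enum m).

Definition welfare (n : nat) (w : nat -> (M -> nat) -> R) (T : nat -> M -> nat) : R :=
  rsum n (fun i => w i (T i)).

(** bundles induced by assigning the k-th arriving item s_k to agent a_k *)
Fixpoint bundles (s : list M) (a : list nat) : nat -> M -> nat :=
  match s, a with
  | j :: s', i :: a' =>
      fun i' j' => if Nat.eqb i' i then madd (bundles s' a' i') j j' else bundles s' a' i' j'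
  | _, _ => fun _ _ => O
  end.

(** OPT(s): max over all partitions of the arrival multiset into n bundles,
    i.e. over all assignments of the arrivals to agents 0..n-1. *)
Definition opt (n : nat) (w : nat -> (M -> nat) -> R) (s : list M) : R :=
  fold_right (fun a acc => Rmax (welfare n w (bundles s a)) acc) 0
    (seqs (seq 0 n) (length s)).

Definition empty_profile : nat -> M -> nat := fun _ _ => O.

Definition add_to (T : nat -> M -> nat) (i : nat) (j : M) : nat -> M -> nat :=
  fun i' => if Nat.eqb i' i then madd (T i') j else T i'.

(** greedy run: sel t T j is the agent chosen at time t, current bundles T, item j *)
Fixpoint greedy_run (sel : nat -> (nat -> M -> nat) -> M -> nat)
    (t : nat) (T : nat -> M -> nat) (s : list M) : nat -> M -> nat :=
  match s with
  | [] => T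
  | j :: s' => greedy_run sel (S t) (add_to T (sel t T j) j) s'
  end.

Definition greedy_rule (n : nat) (w : nat -> (M -> nat) -> R)
    (sel : nat -> (nat -> M -> nat) -> M -> nat) : Prop :=
  forall t T j, (sel t T j < n)%nat /\
    forall i, (i < n)%nat ->
      w i (madd (T i) j) - w i (T i) <= w (sel t T j) (madd (T (sel t T j)) j) - w (sel t T j) (T (sel t T j)).

End Defs.

(* Let O = E[OPT] over m i.i.d. arrivals, and for a profile of bundles T let
   gain(T, j) be the marginal gain of the agent greedy picks for item j at T.
   1. Submodular bound: for every profile T and arrival sequence s,
      OPT(s) <= welfare(T) + sum_{j in s} gain(T, j).  Adding the optimal
      bundles on top of T one item at a time, each step gains at most what it
      would gain at T (diminishing returns), hence at most gain(T, j).
   2. Taking expectations over i.i.d. arrivals: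
      O - welfare(T) <= m * E_j[gain(T, j)], so one greedy step from T closes
      at least a 1/m fraction of the gap to O.
   3. By induction on the number k of remaining arrivals, the gap after k
      greedy steps is at most (1 - 1/m)^k times the initial gap.
   4. Since (1 - 1/m)^m <= 1/e, the gap after m steps is at most O/e. *)

From Stdlib Require Import Reals List Lia Lra FunctionalExtensionality.
Import ListNotations.
Open Scope R_scope.

Definition lsum {A : Type} (l : list A) (f : A -> R) : R :=
  fold_right (fun x acc => f x + acc) 0 l.

Lemma lsum_app {A} (l1 l2 : list A) f : lsum (l1 ++ l2) f = lsum l1 f + lsum l2 f.
Proof. induction l1 as [|x l1 IH]; simpl; [lra|]. unfold lsum in *; simpl. rewrite IH; lra. Qed.

Lemma lsum_map {A B} (g : A -> B) l f : lsum (map g l) f = lsum l (fun x => f (g x)).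
Proof. induction l as [|x l IH]; simpl; auto. unfold lsum in *; simpl. rewrite IH; auto. Qed.

Lemma lsum_flat_map {A B} (g : A -> list B) l f :
  lsum (flat_map g l) f = lsum l (fun x => lsum (g x) f).
Proof. induction l as [|x l IH]; simpl; auto. rewrite lsum_app, IH. reflexivity. Qed.

Lemma lsum_plus {A} (l : list A) f g : lsum l (fun x => f x + g x) = lsum l f + lsum l g.
Proof. induction l as [|x l IH]; unfold lsum in *; simpl; [lra|]. rewrite IH; lra. Qed.

Lemma lsum_scal {A} (l : list A) c f : lsum l (fun x => c * f x) = c * lsum l f.
Proof. induction l as [|x l IH]; unfold lsum in *; simpl; [lra|]. rewrite IH; lra. Qed.

Lemma lsum_le {A} (l : list A) f g : (forall x, f x <= g x) -> lsum l f <= lsum l g.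
Proof.
  intros H; induction l as [|x l IH]; unfold lsum in *; simpl; [lra|].
  specialize (H x); lra.
Qed.

Lemma lsum_ext {A} (l : list A) f g : (forall x, f x = g x) -> lsum l f = lsum l g.
Proof. intros H; induction l as [|x l IH]; unfold lsum in *; simpl; auto. rewrite H, IH; auto. Qed.

Lemma lsum_nonneg {A} (l : list A) f : (forall x, 0 <= f x) -> 0 <= lsum l f.
Proof.
  intros H; induction l as [|x l IH]; unfold lsum in *; simpl; [lra|].
  specialize (H x); lra.
Qed.

Lemma rsum_ext n f g : (forall k, (k < n)%nat -> f k = g k) -> rsum n f = rsum n g.
Proof.
  induction n as [|n IH]; intros H; simpl; auto.
  rewrite IH by (intros; apply H; lia). rewrite (H n) by lia. reflexivity.
Qed.

Lemma rsum_le n f g : (forall k, (k < n)%nat -> f k <= g k) -> rsum n f <= rsum n g.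
Proof.
  induction n as [|n IH]; intros H; simpl; [lra|].
  pose proof (H n ltac:(lia)). pose proof (IH ltac:(intros; apply H; lia)). lra.
Qed.

Lemma rsum_nonneg n f : (forall k, (k < n)%nat -> 0 <= f k) -> 0 <= rsum n f.
Proof.
  induction n as [|n IH]; intros H; simpl; [lra|].
  pose proof (H n ltac:(lia)). pose proof (IH ltac:(intros; apply H; lia)). lra.
Qed.

Lemma rsum_update n f g i : (i < n)%nat -> (forall k, k <> i -> f k = g k) ->
  rsum n f = rsum n g + (f i - g i).
Proof.
  induction n as [|n IH]; intros Hi H; [lia|]. simpl.
  destruct (Nat.eq_dec i n) as [->|Hne].
  - rewrite (rsum_ext n f g) by (intros; apply H; lia). lra.
  - rewrite IH by (auto; lia). rewrite (H n) by auto. lra.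
Qed.

Lemma fold_Rmax_le {A} (F : A -> R) L B : 0 <= B -> (forall a, In a L -> F a <= B) ->
  fold_right (fun a acc => Rmax (F a) acc) 0 L <= B.
Proof. induction L as [|a L IH]; simpl; intros H0 H; auto. apply Rmax_lub; auto. Qed.

Lemma fold_Rmax_nonneg {A} (F : A -> R) L : 0 <= fold_right (fun a acc => Rmax (F a) acc) 0 L.
Proof. induction L as [|a L IH]; simpl; [lra|]. eapply Rle_trans; [exact IH | apply Rmax_r]. Qed.

Lemma seqs_entries {A} (l : list A) k a : In a (seqs l k) -> Forall (fun x => In x l) a.
Proof.
  revert a; induction k as [|k IH]; simpl; intros a H.
  - destruct H as [<-|[]]; constructor.
  - apply in_flat_map in H as [x [Hx Hy]]. apply in_map_iff in Hy as [y [<- Hy]].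
    constructor; auto.
Qed.

Lemma one_minus_inv_nonneg m : (1 <= m)%nat -> 0 <= 1 - / INR m.
Proof.
  intros Hm. assert (HmR : 1 <= INR m) by (apply (le_INR 1); auto).
  assert (/ INR m <= 1) by (rewrite <- Rinv_1; apply Rinv_le_contravar; lra). lra.
Qed.

(** [(1 - 1/m)^m <= 1/e], from [1 + x <= exp x] at [x = -1/m]. *)
Lemma one_minus_inv_pow_le m : (1 <= m)%nat -> (1 - / INR m) ^ m <= / exp 1.
Proof.
  intros Hm. assert (HmR : 1 <= INR m) by (apply (le_INR 1); auto).
  apply Rle_trans with (exp (- / INR m) ^ m).
  { apply pow_incr. split; [apply one_minus_inv_nonneg; auto|]. apply (exp_ineq1_le (- / INR m)). }
  assert (Hpow : forall x k, exp x ^ k = exp (INR k * x)).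
  { intros x k; induction k as [|k IH].
    - simpl. rewrite Rmult_0_l, exp_0. reflexivity.
    - rewrite S_INR. simpl pow. rewrite IH, <- exp_plus. f_equal. ring. }
  rewrite Hpow, <- exp_Ropp. right. f_equal. field. lra.
Qed.

Section Expectation.
Context {M : Type} (enum : list M) (p : M -> R) (Hp_nonneg : forall j, 0 <= p j)
  (Hp_sum : lsum enum p = 1).

Lemma seq_prob_nonneg s : 0 <= seq_prob p s.
Proof. induction s as [|j s IH]; simpl; [lra|]. apply Rmult_le_pos; auto. Qed.

Lemma expect_lsum k f :
  expect enum p k f = lsum (seqs enum k) (fun s => seq_prob p s * f s).
Proof. reflexivity. Qed.

Lemma expect_0 f : expect enum p 0 f = f [].
Proof. unfold expect; simpl. lra. Qed.

Lemma expect_S k f : expect enum p (S k) f =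
  lsum enum (fun a => p a * expect enum p k (fun s => f (a :: s))).
Proof.
  rewrite expect_lsum. simpl seqs. rewrite lsum_flat_map. apply lsum_ext; intros a.
  rewrite lsum_map, expect_lsum, <- lsum_scal. apply lsum_ext; intros s. simpl. lra.
Qed.

Lemma expect_plus k f g :
  expect enum p k (fun s => f s + g s) = expect enum p k f + expect enum p k g.
Proof. rewrite !expect_lsum, <- lsum_plus. apply lsum_ext; intros; lra. Qed.

Lemma expect_le k f g : (forall s, f s <= g s) -> expect enum p k f <= expect enum p k g.
Proof.
  intros H. rewrite !expect_lsum. apply lsum_le; intros s.
  apply Rmult_le_compat_l; auto using seq_prob_nonneg.
Qed.

Lemma lsum_prob_affine x y f :
  lsum enum (fun a => p a * (x + y * f a)) = x + y * lsum enum (fun a => p a * f a).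
Proof.
  rewrite (lsum_ext _ _ (fun a => x * p a + y * (p a * f a))) by (intros; ring).
  rewrite lsum_plus, !lsum_scal, Hp_sum. ring.
Qed.

Lemma expect_const k c : expect enum p k (fun _ => c) = c.
Proof.
  induction k as [|k IH]; [apply expect_0|].
  rewrite expect_S, (lsum_ext _ _ (fun a => p a * (c + 0 * c))).
  - rewrite lsum_prob_affine. ring.
  - intros a. rewrite IH. f_equal. ring.
Qed.

Lemma expect_additive k h :
  expect enum p k (fun s => lsum s h) = INR k * lsum enum (fun j => p j * h j).
Proof.
  induction k as [|k IH]; [rewrite expect_0; simpl; lra|].
  rewrite expect_S, (lsum_ext _ _ (fun a => p a * (INR k * lsum enum (fun j => p j * h j) + 1 * h a))).
  - rewrite lsum_prob_affine, S_INR. ring.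
  - intros a. f_equal. simpl.
    rewrite (expect_plus k (fun _ => h a) (fun s => lsum s h)), expect_const, IH. ring.
Qed.

End Expectation.

Section Greedy.
Context {M : Type} (eqd : forall x y : M, {x = y} + {x <> y})
  (n : nat) (w : nat -> (M -> nat) -> R)
  (Hw_nonneg : forall i x, (i < n)%nat -> 0 <= w i x)
  (Hw_mono : forall i, (i < n)%nat -> monotone (w i))
  (Hw_dr : forall i, (i < n)%nat -> diminishing_returns eqd (w i))
  (sel : nat -> (nat -> M -> nat) -> M -> nat)
  (Hsel : greedy_rule eqd n w sel).

Definition greedy_gain t T j : R :=
  w (sel t T j) (madd eqd (T (sel t T j)) j) - w (sel t T j) (T (sel t T j)).

Lemma mle_madd x j : mle x (madd eqd x j).
Proof. intros j'. unfold madd. destruct (eqd j' j); lia. Qed.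

Lemma greedy_gain_nonneg t T j : 0 <= greedy_gain t T j.
Proof.
  unfold greedy_gain. destruct (Hsel t T j) as [Hl _].
  pose proof (Hw_mono _ Hl _ _ (mle_madd (T (sel t T j)) j)). lra.
Qed.

Lemma greedy_gain_max t T j i :
  (i < n)%nat -> w i (madd eqd (T i) j) - w i (T i) <= greedy_gain t T j.
Proof. intros Hi. destruct (Hsel t T j) as [_ H]. apply H; auto. Qed.

Lemma welfare_nonneg T : 0 <= welfare n w T.
Proof. apply rsum_nonneg; auto. Qed.

Lemma welfare_add_to T i j : (i < n)%nat ->
  welfare n w (add_to eqd T i j) = welfare n w T + (w i (madd eqd (T i) j) - w i (T i)).
Proof.
  intros Hi. unfold welfare. rewrite (rsum_update n _ (fun k => w k (T k)) i Hi).
  - unfold add_to. rewrite Nat.eqb_refl. reflexivity.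
  - intros k Hk. unfold add_to. apply Nat.eqb_neq in Hk. rewrite Hk. reflexivity.
Qed.

Definition profile_plus (T U : nat -> M -> nat) : nat -> M -> nat :=
  fun i j => (T i j + U i j)%nat.

Lemma profile_plus_cons T j s i a :
  profile_plus T (bundles eqd (j :: s) (i :: a))
  = add_to eqd (profile_plus T (bundles eqd s a)) i j.
Proof.
  extensionality i'; extensionality j'. unfold profile_plus, add_to; simpl.
  destruct (Nat.eqb i' i); auto. unfold madd. destruct (eqd j' j); lia.
Qed.

Lemma profile_plus_empty T s a : (s = [] \/ a = []) -> profile_plus T (bundles eqd s a) = T.
Proof.
  intros Hsa. extensionality i; extensionality j. unfold profile_plus.
  destruct Hsa as [->| ->]; [|destruct s]; simpl; lia.
Qed.

Lemma welfare_profile_plus_le t T s a : Forall (fun i => (i < n)%nat) a ->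
  welfare n w (profile_plus T (bundles eqd s a))
  <= welfare n w T + lsum s (greedy_gain t T).
Proof.
  revert a; induction s as [|j s IH]; intros a Ha.
  - rewrite profile_plus_empty by auto. simpl. lra.
  - destruct a as [|i a].
    + rewrite profile_plus_empty by auto.
      pose proof (lsum_nonneg (j :: s) _ (greedy_gain_nonneg t T)). lra.
    + inversion Ha as [|? ? Hi Ha']; subst.
      rewrite profile_plus_cons, welfare_add_to by auto.
      assert (Hle : mle (T i) (profile_plus T (bundles eqd s a) i))
        by (intros j'; unfold profile_plus; lia).
      pose proof (IH a Ha'). pose proof (Hw_dr i Hi _ _ j Hle).
      pose proof (greedy_gain_max t T j i Hi).
      change (lsum (j :: s) (greedy_gain t T)) with (greedy_gain t T j + lsum s (greedy_gain t T)).
      lra.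
Qed.

Lemma opt_le_welfare_plus_gains t T s :
  opt eqd n w s <= welfare n w T + lsum s (greedy_gain t T).
Proof.
  unfold opt. apply fold_Rmax_le.
  - pose proof (welfare_nonneg T). pose proof (lsum_nonneg s _ (greedy_gain_nonneg t T)). lra.
  - intros a Ha.
    assert (Hagents : Forall (fun i => (i < n)%nat) a).
    { eapply Forall_impl; [|exact (seqs_entries _ _ _ Ha)].
      intros x Hx. apply in_seq in Hx. lia. }
    eapply Rle_trans; [|exact (welfare_profile_plus_le t T s a Hagents)].
    apply rsum_le; intros k Hk. apply Hw_mono; auto. intros j'. unfold profile_plus; lia.
Qed.

Lemma opt_nonneg s : 0 <= opt eqd n w s.
Proof. apply fold_Rmax_nonneg. Qed.

Context (enum : list M) (p : M -> R) (Hp_nonneg : forall j, 0 <= p j)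
  (Hp_sum : lsum enum p = 1).

Lemma opt_gap_le_expected_gain m t T :
  expect enum p m (opt eqd n w) - welfare n w T
  <= INR m * lsum enum (fun j => p j * greedy_gain t T j).
Proof.
  rewrite <- (expect_additive enum p Hp_sum), <- (expect_const enum p Hp_sum m (welfare n w T)).
  pose proof (expect_le enum p Hp_nonneg m _ _ (opt_le_welfare_plus_gains t T)) as H.
  rewrite expect_plus in H. lra.
Qed.

Lemma greedy_gap_contracts m (Hm : (1 <= m)%nat) : forall k t T,
  expect enum p m (opt eqd n w)
    - expect enum p k (fun s => welfare n w (greedy_run eqd sel t T s))
  <= (1 - / INR m) ^ k * (expect enum p m (opt eqd n w) - welfare n w T).
Proof.
  set (O := expect enum p m (opt eqd n w)).
  set (c := 1 - / INR m).
  assert (HmR : 1 <= INR m) by (apply (le_INR 1); auto).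
  intros k; induction k as [|k IH]; intros t T.
  - rewrite expect_0. simpl. lra.
  - set (W := welfare n w T). set (E := lsum enum (fun j => p j * greedy_gain t T j)).
    assert (Hck : 0 <= c ^ k) by (apply pow_le, one_minus_inv_nonneg; auto).
    assert (Hafter : forall a, O - c ^ k * (O - W) + c ^ k * greedy_gain t T a
      <= expect enum p k (fun s => welfare n w (greedy_run eqd sel (S t) (add_to eqd T (sel t T a) a) s))).
    { intros a. pose proof (IH (S t) (add_to eqd T (sel t T a) a)) as Ha.
      rewrite welfare_add_to in Ha by apply Hsel. fold W in Ha. unfold greedy_gain. lra. }
    assert (Hstep : O - c ^ k * (O - W) + c ^ k * E
      <= expect enum p (S k) (fun s => welfare n w (greedy_run eqd sel t T s))).
    { rewrite expect_S. unfold E. rewrite <- (lsum_prob_affine enum p Hp_sum).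
      apply lsum_le; intros a. apply Rmult_le_compat_l; auto. }
    assert (Hfrac : / INR m * (O - W) <= E).
    { pose proof (opt_gap_le_expected_gain m t T) as HK. fold O W E in HK.
      apply Rmult_le_reg_l with (INR m); [lra|].
      rewrite <- Rmult_assoc, Rinv_r, Rmult_1_l by lra. exact HK. }
    replace (c ^ S k * (O - W)) with (c ^ k * (O - W) - c ^ k * (/ INR m * (O - W)))
      by (unfold c; simpl; ring).
    pose proof (Rmult_le_compat_l _ _ _ Hck Hfrac). lra.
Qed.

End Greedy.

Theorem theorem4p3
  (M : Type) (eqd : forall x y : M, {x = y} + {x <> y})
  (enum : list M) (Henum_nodup : NoDup enum) (Henum_full : forall x : M, In x enum)
  (p : M -> R) (Hp_nonneg : forall j, 0 <= p j)
  (Hp_sum : fold_right (fun j acc => p j + acc) 0 enum = 1)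
  (n : nat) (Hn : (0 < n)%nat)
  (w : nat -> (M -> nat) -> R)
  (Hw_nonneg : forall i x, (i < n)%nat -> 0 <= w i x)
  (Hw_mono : forall i, (i < n)%nat -> monotone (w i))
  (Hw_dr : forall i, (i < n)%nat -> diminishing_returns eqd (w i))
  (m : nat)
  (sel : nat -> (nat -> M -> nat) -> M -> nat)
  (Hsel : greedy_rule eqd n w sel) :
  expect enum p m (fun s => welfare n w (greedy_run eqd sel 0 empty_profile s))
  >= (1 - / exp 1) * expect enum p m (fun s => opt eqd n w s).
Proof.
  change (fun s => opt eqd n w s) with (opt eqd n w).
  set (O := expect enum p m (opt eqd n w)).
  set (W0 := welfare n w empty_profile).
  assert (HW0 : 0 <= W0) by apply (welfare_nonneg n w Hw_nonneg).
  assert (HO : 0 <= O).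
  { unfold O. rewrite <- (expect_const enum p Hp_sum m 0).
    apply expect_le; auto. intros; apply opt_nonneg. }
  assert (He : 0 < / exp 1) by apply Rinv_0_lt_compat, exp_pos.
  destruct m as [|m'].
  - (* no arrivals: the optimum is the empty welfare, which greedy keeps *)
    pose proof (opt_gap_le_expected_gain eqd n w Hw_nonneg Hw_mono Hw_dr sel Hsel
      enum p Hp_nonneg Hp_sum 0 0 empty_profile) as H0.
    rewrite expect_0. simpl greedy_run. simpl INR in H0. rewrite Rmult_0_l in H0.
    fold O W0 in H0 |- *. nra.
  - pose proof (greedy_gap_contracts eqd n w Hw_nonneg Hw_mono Hw_dr sel Hsel
      enum p Hp_nonneg Hp_sum (S m') ltac:(lia) (S m') 0 empty_profile) as Hgap.
    pose proof (one_minus_inv_pow_le (S m') ltac:(lia)) as Hpow.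
    set (c := (1 - / INR (S m')) ^ S m') in *.
    assert (Hc : 0 <= c) by (apply pow_le, one_minus_inv_nonneg; lia).
    fold O W0 in Hgap.
    assert (c * (O - W0) <= / exp 1 * O).
    { apply Rle_trans with (c * O); [nra|]. apply Rmult_le_compat_r; auto. }
    lra.
Qed.
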